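(* Let $(\mathscr{P},\mathscr{B},\mathrm{I})$ be an incidence structure with incidence graph $\Gamma$, let $\varphi$ be a gain function on $\Gamma$ with gain group $G$ acting on the left on a nonempty set $\Lambda$, and let $f:\mathscr{P}\cup\mathscr{B}\to G$ be any function. Let ${}^f\varphi$ be the switched gain function ${}^f\varphi(e)=f(p)\varphi(e)f(b)^{-1}$ for each edge $e=bp$ (oriented from the line $b$ to the point $p$). Write $\mathfrak{M}(\Gamma,\varphi)=(\mathscr{P}',\mathscr{B}',\mathrm{I}')$ and $\mathfrak{M}(\Gamma,{}^f\varphi)=(\mathscr{P}',\mathscr{B}',\mathrm{I}'_f)$. Define $g_1:\mathscr{P}'\to\mathscr{P}'$ by $g_1(x_p)=x_p$ and $g_1(y_{b,\lambda})=y_{b,f(b)\cdot\lambda}$, and $g_2:\mathscr{B}'\to\mathscr{B}'$ by $g_2(z_{p,\lambda})=z_{p,f(p)\cdot\lambda}$. Then $(g_1,g_2)$ is an incidence structure isomorphism from $\mathfrak{M}(\Gamma,\varphi)$ to $\mathfrak{M}(\Gamma,{}^f\varphi)$, i.e. $g_1,g_2$ are bijections and $u\ \mathrm{I}'\ z$ if and only if $g_1(u)\ \mathrm{I}'_f\ g_2(z)$.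
   Context: An incidence structure is a triple $(\mathscr{P},\mathscr{B},\mathrm{I})$ where $\mathscr{P}$ (points) and $\mathscr{B}$ (lines) are nonempty disjoint sets and $\mathrm{I}\subseteq\mathscr{P}\times\mathscr{B}$ is a nonempty incidence relation; write $p\ \mathrm{I}\ b$ when $(p,b)\in\mathrm{I}$. The incidence graph $\Gamma$ is the bipartite graph with vertex set $\mathscr{P}\cup\mathscr{B}$ and an edge $bp$ for each incident pair; every edge is oriented from its line to its point. A gain function with gain group $G$ assigns to each edge $e$ an element $\varphi(e)\in G$. The gain group acts on $\Lambda$ on the left. Construction $\mathfrak{M}(\Gamma,\varphi)$: the incidence structure whose points are the formal symbols $x_p$ ($p\in\mathscr{P}$) and $y_{b,\lambda}$ ($b\in\mathscr{B},\lambda\in\Lambda$), whose lines are the formal symbols $z_{p,\lambda}$ ($p\in\mathscr{P},\lambda\in\Lambda$), and whose incidences are exactly: $x_p$ incident with $z_{p,\lambda}$ for all $\lambda$, and $y_{b,\lambda}$ incident with $z_{p,\mu}$ whenever $b\ \mathrm{I}\ p$ and $\mu=\varphi(bp)\cdot\lambda$. Note $\mathfrak{M}(\Gamma,\varphi)$ and $\mathfrak{M}(\Gamma,{}^f\varphi)$ have the same point and line sets. *)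

From mathcomp Require Import all_boot.
Set Implicit Arguments. Unset Strict Implicit. Unset Printing Implicit Defensive.

Section Construction.
Variables (P B G Lam : Type).
(* incidence relation I between points and lines (boolean, so edges are
   proof-irrelevant) *)
Variable I : P -> B -> bool.

Definition edge := {e : P * B | I e.1 e.2}.

Variables (mul : G -> G -> G) (inv : G -> G) (act : G -> Lam -> Lam).

Inductive MPoint := xpt of P | ypt of B & Lam.
Inductive MLine := zln of P & Lam.

Definition Minc (phi : edge -> G) (u : MPoint) (z : MLine) : Prop :=
  match u, z with
  | xpt p, zln p' _ => p = p'
  | ypt b l, zln p mu => exists h : I p b, mu = act (phi (exist _ (p, b) h)) l
  end.

(* switched gain function  ^f phi (bp) = f(p) phi(bp) f(b)^{-1};
   f is a function on the vertex set P ∪ B, encoded as P + B *)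
Definition switch (f : P + B -> G) (phi : edge -> G) : edge -> G :=
  fun e => mul (mul (f (inl (sval e).1)) (phi e)) (inv (f (inr (sval e).2))).

Definition g1 (f : P + B -> G) (u : MPoint) : MPoint :=
  match u with
  | xpt p => xpt p
  | ypt b l => ypt b (act (f (inr b)) l)
  end.

Definition g2 (f : P + B -> G) (z : MLine) : MLine :=
  match z with zln p l => zln p (act (f (inl p)) l) end.

Definition inc_iso (R1 R2 : MPoint -> MLine -> Prop)
  (h1 : MPoint -> MPoint) (h2 : MLine -> MLine) : Prop :=
  bijective h1 /\ bijective h2 /\ forall u z, R1 u z <-> R2 (h1 u) (h2 z).
End Construction.

From mathcomp Require Import all_boot.

(* Each f(v) acts as a permutation of Lam, so g1 and g2 are bijections, and
   applying f(p) to both sides of the incidence condition mu = phi(bp) . lam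
   turns it into f(p) . mu = (f(p) phi(bp) f(b)^-1) . (f(b) . lam), which is
   the incidence condition of the switched gain function. *)

Section Switching.
Context {G Lam : Type} {one : G} {mul : G -> G -> G} {inv : G -> G}.
Hypothesis mulA : forall x y z, mul x (mul y z) = mul (mul x y) z.
Hypothesis mul1g : forall x, mul one x = x.
Hypothesis mulVg : forall x, mul (inv x) x = one.
Context {act : G -> Lam -> Lam}.
Hypothesis act1 : forall l, act one l = l.
Hypothesis actM : forall g h l, act (mul g h) l = act g (act h l).

Lemma mulgV x : mul x (inv x) = one.
Proof.
have -> : mul x (inv x) = mul (inv (inv x)) (mul (mul (inv x) x) (inv x)).
  by rewrite -[LHS]mul1g -(mulVg (inv x)) -!mulA.
by rewrite mulVg mul1g mulVg.
Qed.

Lemma actK g : cancel (act g) (act (inv g)).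
Proof. by move=> l; rewrite -actM mulVg act1. Qed.

Lemma actVK g : cancel (act (inv g)) (act g).
Proof. by move=> l; rewrite -actM mulgV act1. Qed.

Lemma act_inj g : injective (act g).
Proof. exact: can_inj (actK g). Qed.

Context {P B : Type} {I : P -> B -> bool} (f : P + B -> G).

Lemma g1_bij : bijective (g1 act f).
Proof.
exists (g1 act (fun v => inv (f v))).
- by case=> [p|b l] //=; rewrite actK.
- by case=> [p|b l] //=; rewrite actVK.
Qed.

Lemma g2_bij : bijective (g2 act f).
Proof.
exists (g2 act (fun v => inv (f v))).
- by case=> p l /=; rewrite actK.
- by case=> p l /=; rewrite actVK.
Qed.

Lemma act_switch (phi : edge I -> G) (e : edge I) l :
  act (switch mul inv f phi e) (act (f (inr (sval e).2)) l)
  = act (f (inl (sval e).1)) (act (phi e) l).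
Proof. by rewrite /switch !actM actK. Qed.

Lemma Minc_switch (phi : edge I -> G) u z :
  Minc act phi u z <-> Minc act (switch mul inv f phi) (g1 act f u) (g2 act f z).
Proof.
case: u z => [p|b l] [p' mu] //=.
split=> -[h E]; exists h.
- by rewrite (act_switch phi (exist _ (p', b) h)) E.
- by apply: (act_inj (f (inl p'))); rewrite E (act_switch phi (exist _ (p', b) h)).
Qed.

End Switching.

Theorem proposition1
  (P B G Lam : Type) (I : P -> B -> bool)
  (P_ne : inhabited P) (B_ne : inhabited B)
  (I_ne : exists p b, I p b)
  (one : G) (mul : G -> G -> G) (inv : G -> G)
  (mulA : forall x y z, mul x (mul y z) = mul (mul x y) z)
  (mul1g : forall x, mul one x = x)
  (mulVg : forall x, mul (inv x) x = one)
  (act : G -> Lam -> Lam)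
  (act1 : forall l, act one l = l)
  (actM : forall g h l, act (mul g h) l = act g (act h l))
  (Lam_ne : inhabited Lam)
  (phi : edge I -> G) (f : P + B -> G) :
  inc_iso (Minc act phi) (Minc act (switch mul inv f phi)) (g1 act f) (g2 act f).
Proof.
split; [|split].
- exact: (g1_bij mulA mul1g mulVg act1 actM f).
- exact: (g2_bij mulA mul1g mulVg act1 actM f).
- exact: (Minc_switch mulVg act1 actM f phi).
Qed.
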